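(* Let $G$ be a connected graph with vertex set $\{u_1,\dots,u_n\}$, $n\ge2$, let $U_1,\dots,U_k$ be the non-singleton true twin equivalence classes of $G$, and let $\mathcal{H}=\{H_1,\dots,H_n\}$ be a family of graphs. Then $$\operatorname{adim}_l(G\circ\mathcal{H})=\sum_{i=1}^n\operatorname{adim}_l(H_i)+\sum_{j:\,I\cap U_j\ne\emptyset}(|I\cap U_j|-1)+\varrho'(G,\mathcal{H}).$$
   Context: All graphs are finite and simple with at least one vertex. $d_G$ is shortest-path distance ($+\infty$ between components), $d_{G,2}(x,y)=\min\{d_G(x,y),2\}$; $s$ distinguishes $x,y$ w.r.t. $d$ if $d(s,x)\ne d(s,y)$. $\operatorname{adim}_l(H)$ is the minimum size of $S\subseteq V(H)$ such that any two adjacent vertices of $H$ are distinguished w.r.t. $d_{H,2}$ by some vertex of $S$; minimum such sets are local adjacency bases. $\Phi$: class of edgeless graphs. $\mathcal{G}$: class of graphs $H$ such that every local adjacency basis $B$ of $H$ satisfies $B\subseteq N_H(v)$ for some $v\in V(H)$. True twins: $N[x]=N[y]$. Lexicographic product $G\circ\mathcal{H}$: vertex set $\bigcup_i\{u_i\}\times V(H_i)$, $(u_i,v)\sim(u_j,w)$ iff $u_iu_j\in E(G)$, or $i=j$ and $vw\in E(H_i)$. Notation: $T(G)=\bigcup_j U_j$; $V_E=\{u_i\in V(G)-T(G): H_i\in\Phi\}$; $I=\{u_i: H_i\in\mathcal{G}\}$; for each $j$ with $I\cap U_j\ne\emptyset$ choose (arbitrarily) one vertex of $I\cap U_j$ and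 let $I'_j$ be the remaining vertices of $I\cap U_j$ ($I'_j=\emptyset$ otherwise); $X_E=I-\bigcup_jI'_j$. Two vertices $u_i,u_j\in X_E$ satisfy $\mathcal{R}'$ iff $u_i\sim u_j$ and $d_{G,2}(u,u_i)=d_{G,2}(u,u_j)$ for all $u\in V(G)-(V_E\cup\{u_i,u_j\})$. $\varrho'(G,\mathcal{H})$ is the minimum $|A|$ over $A\subseteq X_E$ such that every pair $u_i,u_j\in X_E$ satisfying $\mathcal{R}'$ is distinguished by some vertex of $A$ (w.r.t. $d_{G,2}$). *)

From mathcomp Require Import all_boot.
Set Implicit Arguments. Unset Strict Implicit. Unset Printing Implicit Defensive.

Definition simple_graph (T : finType) (e : rel T) : Prop :=
  symmetric e /\ irreflexive e.

Definition connected_graph (T : finType) (e : rel T) : Prop :=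
  forall x y : T, connect e x y.

Definition walk_len (T : finType) (e : rel T) (x y : T) (k : nat) : bool :=
  [exists p : k.-tuple T, path e x p && (last x p == y)].

(* d_{G,2}(x,y) = min(d_G(x,y), 2), where d_G is the length of a shortest
   walk (= +oo if none); i.e. 0 if d=0, 1 if d=1, and 2 otherwise. *)
Definition dist2 (T : finType) (e : rel T) (x y : T) : nat :=
  if walk_len e x y 0 then 0 else if walk_len e x y 1 then 1 else 2.

Definition ladj_gen (T : finType) (e : rel T) (S : {set T}) : bool :=
  [forall x, forall y, e x y ==>
     [exists s in S, dist2 e s x != dist2 e s y]].

Definition adim_l (T : finType) (e : rel T) : nat :=
  \big[minn/#|T|]_(S : {set T} | ladj_gen e S) #|S|.

Definition ladj_basis (T : finType) (e : rel T) (B : {set T}) : bool :=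
  ladj_gen e B && (#|B| == adim_l e).

Definition edgeless (T : finType) (e : rel T) : bool :=
  [forall x, forall y, ~~ e x y].

Definition in_classG (T : finType) (e : rel T) : bool :=
  [forall B : {set T}, ladj_basis e B ==>
    [exists v : T, B \subset [set u | e v u]]].

Definition cnbhd (T : finType) (e : rel T) (x : T) : {set T} :=
  [set y | (y == x) || e x y].

Definition twin_class (T : finType) (e : rel T) (x : T) : {set T} :=
  [set y | cnbhd e y == cnbhd e x].

Definition twin_classes (T : finType) (e : rel T) : {set {set T}} :=
  [set twin_class e x | x in [set x | 1 < #|twin_class e x|]].

Definition TG (T : finType) (e : rel T) : {set T} := cover (twin_classes e).

Section Lex.
Variables (n : nat) (e : rel 'I_n) (V : 'I_n -> finType)
          (E : forall i, rel (V i)).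

Definition lex_adj : rel {i : 'I_n & V i} :=
  fun x y => e (tag x) (tag y) || ((tag x == tag y) && @E (tag x) (tagged x) (tagged_as x y)).

Definition Iset : {set 'I_n} := [set i | in_classG (@E i) ].

Definition VE : {set 'I_n} := [set i | (i \notin TG e) && edgeless (@E i) ].

(* X_E = I - U_j I'_j, for the choice rep(U_j) of a vertex of I cap U_j *)
Definition XE (rep : {set 'I_n} -> 'I_n) : {set 'I_n} :=
  Iset :\: \bigcup_(C in twin_classes e) ((Iset :&: C) :\ rep C).

Definition relR' (rep : {set 'I_n} -> 'I_n) (i j : 'I_n) : bool :=
  [&& i \in XE rep, j \in XE rep, e i j &
   [forall u, (u \notin VE :|: [set i; j]) ==> (dist2 e u i == dist2 e u j)]].

Definition rho_ok (rep : {set 'I_n} -> 'I_n) (A : {set 'I_n}) : bool :=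
  (A \subset XE rep) &&
  [forall i, forall j, relR' rep i j ==>
     [exists s in A, dist2 e s i != dist2 e s j]].

Definition rho' (rep : {set 'I_n} -> 'I_n) : nat :=
  \big[minn/#|XE rep|]_(A : {set 'I_n} | rho_ok rep A) #|A|.

Definition rep_ok (rep : {set 'I_n} -> 'I_n) : Prop :=
  forall C, C \in twin_classes e -> Iset :&: C != set0 -> rep C \in Iset :&: C.

End Lex.

From mathcomp Require Import all_boot.
Set Implicit Arguments. Unset Strict Implicit. Unset Printing Implicit Defensive.

(* A set S of vertices of G o H is a local adjacency generator iff every slice
   S_i = {v | (u_i, v) in S} is one for H_i and every edge u_i u_j of G is
   resolved: S_i or S_j is undominated (no vertex of H_i is adjacent to all of
   it), or some u_k, k <> i, j, with S_k nonempty distinguishes u_i and u_j.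
   A basis of H_i can be chosen undominated unless H_i is in G, one extra
   vertex always suffices, and for H_i in G it is also necessary.  Hence
   adim_l(G o H) is the sum of the adim_l(H_i) plus the least size of a set
   D of indices in I such that every edge of G inside I - D is distinguished
   by some u_k with k in D or H_k not edgeless.  Two twins in I cannot both be
   missing from D, so D contains all but one vertex of each I cap U_j, and the
   rest of D must distinguish the R'-related pairs of X_E. *)

Lemma bigmin_leq (I : finType) (P : pred I) (f : I -> nat) d x :
  P x -> \big[minn/d]_(y | P y) f y <= f x.
Proof.
move=> Px; have : x \in index_enum I by rewrite mem_index_enum.
elim: (index_enum _) => // a r IH; rewrite inE big_cons => /predU1P[<-|xr].
  by rewrite Px geq_minl.
by case: ifP => _; [rewrite geq_min IH ?orbT | exact: IH].
Qed.

Lemma bigmin_attained (I : finType) (P : pred I) (f : I -> nat) d x0 :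
  P x0 -> f x0 <= d -> exists2 x, P x & \big[minn/d]_(y | P y) f y = f x.
Proof.
move=> Px0 le_x0d; case: (arg_minnP f Px0) => x Px minx; exists x => //.
apply/eqP; rewrite eqn_leq bigmin_leq //=.
elim/big_ind: _ => [|m1 m2 h1 h2|y /minx //]; first exact: leq_trans (minx _ Px0) _.
by rewrite leq_min h1.
Qed.

Lemma sum_nat_mem (T : finType) (A : {set T}) : \sum_i (i \in A : nat) = #|A|.
Proof. by rewrite -sum1_card [RHS]big_mkcond; apply: eq_bigr => i _; case: (i \in A). Qed.

Lemma card_bigcup_disj (I T : finType) (P : {pred I}) (f : I -> {set T}) :
  (forall a b x, a \in P -> b \in P -> x \in f a -> x \in f b -> a = b) ->
  #|\bigcup_(a in P) f a| = \sum_(a in P) #|f a|.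
Proof.
move=> disj.
under [RHS]eq_bigr do rewrite -sum1_card big_mkcond.
rewrite -sum1_card big_mkcond (exchange_big_dep xpredT) //=; apply: eq_bigr => x _.
have [/bigcupP[a0 a0P xa0] | xU] := boolP (x \in \bigcup_(a in P) f a).
  rewrite (bigD1 a0) ?a0P //= xa0 big1 // => a /andP[/andP[aP _] aa0].
  by case: ifP => // xa; rewrite (disj _ _ _ aP a0P xa xa0) eqxx in aa0.
rewrite big1 // => a /andP[aP _]; case: ifP => // xa.
by case/negP: xU; apply/bigcupP; exists a.
Qed.

Section LocalAdjacencyGenerators.
Variables (T : finType) (e : rel T).

Lemma dist2E x y : dist2 e x y = if x == y then 0 else if e x y then 1 else 2.
Proof.
have walk0 : walk_len e x y 0 = (x == y).
  apply/existsP/idP => [[p]|/eqP<-]; first by rewrite tuple0.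
  by exists [tuple]; rewrite /= eqxx.
have walk1 : walk_len e x y 1 = e x y.
  apply/existsP/idP => [[p]|exy]; last by exists [tuple y]; rewrite /= exy eqxx.
  by case/tupleP: p => z p; rewrite tuple0 /= andbT => /andP[exz /eqP<-].
by rewrite /dist2 walk0 walk1.
Qed.

Lemma dist2C : symmetric e -> forall x y, dist2 e x y = dist2 e y x.
Proof. by move=> esym x y; rewrite !dist2E eq_sym esym. Qed.

Lemma ladj_genS (A B : {set T}) : ladj_gen e A -> A \subset B -> ladj_gen e B.
Proof.
move=> /forallP genA sAB; apply/forallP => x; apply/forallP => y; apply/implyP => exy.
have /existsP[s /andP[sA hs]] := implyP (forallP (genA x) y) exy.
by apply/existsP; exists s; rewrite (subsetP sAB).
Qed.

Lemma ladj_gen_neq0 A x y : e x y -> ladj_gen e A -> A != set0.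
Proof.
move=> exy /forallP/(_ x)/forallP/(_ y)/implyP/(_ exy)/existsP[s /andP[sA _]].
by apply/set0Pn; exists s.
Qed.

Lemma ladj_gen_leq A : ladj_gen e A -> adim_l e <= #|A|.
Proof. exact: bigmin_leq. Qed.

Definition undominated (A : {set T}) := [forall v, ~~ (A \subset [set u | e v u])].

Lemma undominatedS (A B : {set T}) : undominated A -> A \subset B -> undominated B.
Proof.
move=> /forallP undomA sAB; apply/forallP => v; apply: contra (undomA v).
exact: subset_trans.
Qed.

Lemma undominated_neq0 (x0 : T) A : undominated A -> A != set0.
Proof. by move/forallP/(_ x0); apply: contra => /eqP ->; rewrite sub0set. Qed.

Lemma edgeless_in_classG (x0 : T) : edgeless e -> in_classG e.
Proof.
move=> /forallP noedge; apply/forallP => B; apply/implyP => /andP[_ /eqP cardB].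
have : adim_l e <= #|(set0 : {set T})|.
  apply: ladj_gen_leq; apply/forallP => x; apply/forallP => y.
  by rewrite (negbTE (forallP (noedge x) y)).
rewrite cards0 leqn0 -cardB cards_eq0 => /eqP ->.
by apply/existsP; exists x0; rewrite sub0set.
Qed.

Lemma edgeless_undominated A : edgeless e -> A != set0 -> undominated A.
Proof.
move=> /forallP noedge /set0Pn[x xA]; apply/forallP => v.
by apply/negP => /subsetP/(_ x xA); rewrite inE (negbTE (forallP (noedge v) x)).
Qed.

Hypothesis esym : symmetric e.
Hypothesis eirr : irreflexive e.

Lemma adj_neq x y : e x y -> x != y.
Proof. by apply: contraTneq => ->; rewrite eirr. Qed.

Lemma dist2_adj x y : e x y -> dist2 e x y = 1.
Proof. by move=> exy; rewrite dist2E (negbTE (adj_neq exy)) exy. Qed.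

Lemma ladj_genT : ladj_gen e setT.
Proof.
apply/forallP => x; apply/forallP => y; apply/implyP => exy.
by apply/existsP; exists x; rewrite inE (dist2_adj exy) dist2E eqxx.
Qed.

Lemma ladj_basis_exists : exists2 B, ladj_gen e B & #|B| = adim_l e.
Proof.
rewrite /adim_l.
have [B genB ->] := bigmin_attained (f := fun S : {set T} => #|S|) ladj_genT (max_card _).
by exists B.
Qed.

Lemma adim_l_lt_card (x0 : T) : adim_l e < #|T|.
Proof.
suff /ladj_gen_leq : ladj_gen e [set~ x0].
  by rewrite cardsC1 => /leq_ltn_trans; apply; rewrite prednK // (cardD1 x0).
apply/forallP => x; apply/forallP => y; apply/implyP => exy.
have [<-|nx] := eqVneq x x0.
  apply/existsP; exists y; rewrite !inE eq_sym (adj_neq exy) /=.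
  by rewrite dist2_adj 1?esym // dist2E eqxx.
by apply/existsP; exists x; rewrite !inE nx (dist2_adj exy) dist2E eqxx.
Qed.

Lemma in_classG_undominated_gt A :
  in_classG e -> ladj_gen e A -> undominated A -> adim_l e < #|A|.
Proof.
move=> classG genA undomA; rewrite ltn_neqAle ladj_gen_leq // andbT.
apply/negP => /eqP cardA.
have : ladj_basis e A by rewrite /ladj_basis genA cardA eqxx.
move/(implyP (forallP classG A))/existsP => [v sAv].
by move: (forallP undomA v); rewrite sAv.
Qed.

Lemma undominated_basis :
  exists B, [/\ ladj_gen e B, #|B| = adim_l e & ~~ in_classG e -> undominated B].
Proof.
have [classG | /forallPn[B]] := boolP (in_classG e).
  by have [B genB cardB] := ladj_basis_exists; exists B.
rewrite negb_imply => /andP[/andP[genB /eqP cardB] /existsPn dom].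
by exists B; split=> // _; apply/forallP.
Qed.

(* Adding to a dominated basis the vertex v dominating it makes it undominated:
   a vertex w dominating the result is adjacent to v, and the vertex of the
   basis separating w and v would be adjacent to both. *)
Lemma undominated_gen_succ (x0 : T) :
  exists B, [/\ ladj_gen e B, #|B| = (adim_l e).+1 & undominated B].
Proof.
have [B genB cardB] := ladj_basis_exists.
have [undomB | /forallPn[v /negbNE sBv]] := boolP (undominated B).
  have /card_gt0P[x] : 0 < #|~: B|.
    by rewrite -(leq_add2l #|B|) cardsC addn1 cardB adim_l_lt_card.
  rewrite inE => xB; exists (x |: B); rewrite cardsU1 xB cardB; split => //.
  - exact: ladj_genS genB (subsetUr _ _).
  - exact: undominatedS undomB (subsetUr _ _).
have vB : v \notin B by apply/negP => /(subsetP sBv); rewrite inE eirr.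
exists (v |: B); rewrite cardsU1 vB cardB; split => //.
  exact: ladj_genS genB (subsetUr _ _).
apply/forallP => w; apply/negP => sBw.
have ewv : e w v by have := subsetP sBw v (setU11 v B); rewrite inE.
have /existsP[s /andP[sB]] := implyP (forallP (forallP genB w) v) ewv.
have esv : e s v by have := subsetP sBv s sB; rewrite inE esym.
have esw : e s w by have := subsetP sBw s (setU1r v sB); rewrite inE esym.
by rewrite !dist2_adj.
Qed.

Lemma ladj_gen_extra (x0 : T) (extra : bool) : exists B : {set T},
  [&& ladj_gen e B, #|B| == adim_l e + extra &
      (extra || ~~ in_classG e) ==> undominated B].
Proof.
case: extra => /=.
  have [B [genB cardB undomB]] := undominated_gen_succ x0.
  by exists B; rewrite genB cardB addn1 eqxx.
have [B [genB cardB undomB]] := undominated_basis.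
by exists B; rewrite genB cardB addn0 eqxx; apply/implyP.
Qed.

End LocalAdjacencyGenerators.

Section TrueTwins.
Variables (T : finType) (e : rel T).
Hypothesis esym : symmetric e.
Local Notation tw := (twin_class e).

Lemma twin_class_refl x : x \in tw x.
Proof. by rewrite inE. Qed.

Lemma twin_class_eq x y : y \in tw x -> tw y = tw x.
Proof. by rewrite inE => /eqP cnbhd_yx; apply/setP => z; rewrite !inE cnbhd_yx. Qed.

Lemma twin_adj x y : y \in tw x -> y != x -> e x y.
Proof.
rewrite inE => /eqP cnbhd_yx yx.
have : y \in cnbhd e y by rewrite inE eqxx.
by rewrite cnbhd_yx inE (negbTE yx).
Qed.

Lemma twin_dist2 x y k : y \in tw x -> k != x -> k != y -> dist2 e k x = dist2 e k y.
Proof.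
rewrite inE => /eqP cnbhd_yx kx ky; rewrite !dist2E (negbTE kx) (negbTE ky).
have adjE z : k != z -> e k z = (k \in cnbhd e z).
  by move=> kz; rewrite inE (negbTE kz) esym.
by rewrite (adjE _ kx) (adjE _ ky) cnbhd_yx.
Qed.

Lemma twin_adj_lift i j x y : x \in tw i -> y \in tw j -> e i j -> x != y -> e x y.
Proof.
move=> xi yj eij xy.
have : j \in cnbhd e i by rewrite inE eij orbT.
move: (xi); rewrite inE => /eqP <-; rewrite inE => /orP[/eqP jx | exj].
  by subst j; apply: twin_adj; rewrite // eq_sym.
have : x \in cnbhd e j by rewrite inE esym exj orbT.
by move: yj; rewrite inE => /eqP <-; rewrite inE (negbTE xy) esym.
Qed.

Lemma twin_classes_eq C x : C \in twin_classes e -> x \in C -> C = tw x.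
Proof. by case/imsetP => z _ -> xz; rewrite (twin_class_eq xz). Qed.

Lemma mem_TG x : (x \in TG e) = (tw x \in twin_classes e).
Proof.
apply/bigcupP/idP => [[C classC xC] | classx].
  by rewrite -(twin_classes_eq classC xC).
by exists (tw x); rewrite // twin_class_refl.
Qed.

Lemma twin_classes_other C x :
  C \in twin_classes e -> x \in C -> exists2 y, y \in C & y != x.
Proof.
case/imsetP => z; rewrite inE => /card_gt1P[a [b [aC bC ab]]] -> _.
have [ax | ax] := eqVneq a x; last by exists a.
by exists b; rewrite // -ax eq_sym.
Qed.

End TrueTwins.

Section LexicographicProduct.
Variables (n : nat) (e : rel 'I_n) (V : 'I_n -> finType) (E : forall i, rel (V i)).
Hypothesis esym : symmetric e.
Hypothesis eirr : irreflexive e.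
Hypothesis Esym : forall i, symmetric (@E i).
Hypothesis Eirr : forall i, irreflexive (@E i).
Local Notation eP := (lex_adj e E).
Local Notation vertex := {i : 'I_n & V i}.

Definition sigma_set (F : forall i, {set V i}) : {set vertex} :=
  [set p | tagged p \in F (tag p)].

Definition slice (S : {set vertex}) i : {set V i} := [set x | Tagged V x \in S].

Lemma sigma_set_slice S : sigma_set (slice S) = S.
Proof. by apply/setP => -[i v]; rewrite !inE. Qed.

Lemma card_sigma_set F : #|sigma_set F| = \sum_i #|F i|.
Proof.
under eq_bigr do rewrite -sum1_card.
rewrite (sig_big_dep xpredT (fun i (x : V i) => x \in F i) (fun _ _ => 1)) -sum1_card.
by apply: eq_bigl => -[i v]; rewrite !inE.
Qed.

Lemma lex_adj_eq i (v w : V i) : eP (Tagged V v) (Tagged V w) = E v w.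
Proof. by rewrite /lex_adj /= eirr eqxx /= tagged_asE. Qed.

Lemma lex_adj_neq i j (v : V i) (w : V j) :
  i != j -> eP (Tagged V v) (Tagged V w) = e i j.
Proof. by move=> ij; rewrite /lex_adj /= (negbTE ij) orbF. Qed.

Lemma dist2_lex_eq i (x v : V i) : dist2 eP (Tagged V x) (Tagged V v) = dist2 (@E i) x v.
Proof. by rewrite !dist2E eq_Tagged /= lex_adj_eq. Qed.

Lemma dist2_lex_neq k i (x : V k) (v : V i) : k != i ->
  dist2 eP (Tagged V x) (Tagged V v) = dist2 e k i.
Proof.
move=> ki; rewrite !dist2E lex_adj_neq // (negbTE ki).
by case: eqP => // /(congr1 tag) /= eki; rewrite eki eqxx in ki.
Qed.

Definition slices_separate (F : forall i, {set V i}) :=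
  forall i j, e i j -> [|| undominated (@E i) (F i), undominated (@E j) (F j) |
     [exists k, [&& k != i, k != j, F k != set0 & dist2 e k i != dist2 e k j]]].

Lemma dist2_lex_dominated i j (z v : V i) (w : V j) : e i j -> E v z ->
  dist2 eP (Tagged V z) (Tagged V v) = dist2 eP (Tagged V z) (Tagged V w).
Proof.
move=> eij Evz; rewrite dist2_lex_eq dist2_lex_neq ?(adj_neq eirr eij) //.
by rewrite !dist2_adj // Esym.
Qed.

Lemma dist2_lex_undominated i j (z v : V i) (w : V j) : e i j -> ~~ E v z ->
  dist2 eP (Tagged V z) (Tagged V v) != dist2 eP (Tagged V z) (Tagged V w).
Proof.
move=> eij Evz; rewrite dist2_lex_eq dist2_lex_neq ?(adj_neq eirr eij) //.
by rewrite (dist2_adj eirr eij) dist2E Esym (negbTE Evz); case: (z == v).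
Qed.

Lemma ladj_gen_lex_slices F : ladj_gen eP (sigma_set F) ->
  (forall i, ladj_gen (@E i) (F i)) /\ slices_separate F.
Proof.
move=> /forallP genS; split.
  move=> i; apply/forallP => x; apply/forallP => y; apply/implyP => Exy.
  have := implyP (forallP (genS (Tagged V x)) (Tagged V y)); rewrite lex_adj_eq.
  case/(_ Exy)/existsP => -[k z]; rewrite inE /= => /andP[zF].
  have [eki|ki] := eqVneq k i; last by rewrite !dist2_lex_neq // eqxx.
  by subst k; rewrite !dist2_lex_eq => sep; apply/existsP; exists z; rewrite zF.
move=> i j eij; have ij := adj_neq eirr eij.
have [//|/forallPn[v /negbNE sFv]] /= := boolP (undominated (@E i) (F i)).
have [//|/forallPn[w /negbNE sFw]] /= := boolP (undominated (@E j) (F j)).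
have := implyP (forallP (genS (Tagged V v)) (Tagged V w)); rewrite lex_adj_neq //.
case/(_ eij)/existsP => -[k z]; rewrite inE /= => /andP[zF].
have [eki|ki] := eqVneq k i.
  subst k; have Evz : E v z by have := subsetP sFv z zF; rewrite inE.
  by rewrite (dist2_lex_dominated w eij Evz) eqxx.
have [ekj|kj] := eqVneq k j.
  subst k; have Ewz : E w z by have := subsetP sFw z zF; rewrite inE.
  by rewrite eq_sym (dist2_lex_dominated v _ Ewz) ?eqxx // esym.
rewrite !dist2_lex_neq // => sep; apply/existsP; exists k; rewrite ki kj sep andbT.
by apply/set0Pn; exists z.
Qed.

Lemma ladj_gen_lex_sigma F : (forall i, ladj_gen (@E i) (F i)) -> slices_separate F ->
  ladj_gen eP (sigma_set F).
Proof.
move=> genF sepF; apply/forallP => -[i v]; apply/forallP => -[j w]; apply/implyP.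
rewrite /lex_adj /= => /orP[eij | /andP[/eqP eji Evw]]; last first.
  subst j; rewrite tagged_asE in Evw.
  have /existsP[z /andP[zF sep]] := implyP (forallP (forallP (genF i) v) w) Evw.
  by apply/existsP; exists (Tagged V z); rewrite inE zF !dist2_lex_eq.
have ij := adj_neq eirr eij.
case/or3P: (sepF i j eij) => [/forallP/(_ v) | /forallP/(_ w) | ].
- case/subsetPn => z zF; rewrite inE => Evz.
  by apply/existsP; exists (Tagged V z); rewrite inE zF dist2_lex_undominated.
- case/subsetPn => z zF; rewrite inE => Ewz.
  apply/existsP; exists (Tagged V z); rewrite inE zF eq_sym /=.
  by rewrite dist2_lex_undominated // esym.
case/existsP => k /and4P[ki kj /set0Pn[z zF] sep].
by apply/existsP; exists (Tagged V z); rewrite inE zF !dist2_lex_neq.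
Qed.

Hypothesis Vn0 : forall i, 0 < #|V i|.

Definition EL : {set 'I_n} := [set i | edgeless (@E i)].

Lemma EL_sub_Iset : EL \subset Iset E.
Proof.
apply/subsetP => i; rewrite !inE; have /card_gt0P[x0 _] := Vn0 i.
exact: edgeless_in_classG.
Qed.

(* [D] collects the indices whose slice is one vertex larger than a basis of
   [E i], which is what it costs to make it undominated when [E i] lies in the
   class G.  Slices at indices outside [EL :\: D] may be taken nonempty. *)
Definition occupied (D : {set 'I_n}) k := (k \notin EL) || (k \in D).

Definition separating (D : {set 'I_n}) :=
  forall i j, i \in Iset E -> j \in Iset E -> i \notin D -> j \notin D -> e i j ->
    exists k, [/\ k != i, k != j, occupied D k & dist2 e k i != dist2 e k j].

Lemma adim_lex_le D : separating D -> adim_l eP <= \sum_i adim_l (@E i) + #|D|.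
Proof.
move=> sepD.
have slice_ex i : exists B : {set V i}, [&& ladj_gen (@E i) B,
    #|B| == adim_l (@E i) + (i \in D) &
    ((i \in D) || (i \notin Iset E)) ==> undominated (@E i) B].
  by have /card_gt0P[x0 _] := Vn0 i; rewrite inE; apply: ladj_gen_extra.
pose F i := xchoose (slice_ex i).
have genF i : ladj_gen (@E i) (F i) by case/and3P: (xchooseP (slice_ex i)).
have cardF i : #|F i| = adim_l (@E i) + (i \in D).
  by case/and3P: (xchooseP (slice_ex i)) => _ /eqP.
have undomF i : (i \in D) || (i \notin Iset E) -> undominated (@E i) (F i).
  by case/and3P: (xchooseP (slice_ex i)) => _ _ /implyP.
have dominated_in i : ~~ undominated (@E i) (F i) -> (i \in Iset E) && (i \notin D).
  by apply: contraNT; rewrite negb_and negbK orbC; apply: undomF.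
have sepF : slices_separate F.
  move=> i j eij.
  have [//|/dominated_in/andP[iI iD]] /= := boolP (undominated (@E i) (F i)).
  have [//|/dominated_in/andP[jI jD]] /= := boolP (undominated (@E j) (F j)).
  have [k [ki kj occk sep]] := sepD i j iI jI iD jD eij.
  apply/existsP; exists k; rewrite ki kj sep andbT /=.
  case/orP: occk => [|kD].
    rewrite inE => /forallPn[x /forallPn[y /negbNE Exy]].
    exact: ladj_gen_neq0 Exy (genF k).
  have /card_gt0P[x0 _] := Vn0 k.
  by apply: (undominated_neq0 x0); apply: undomF; rewrite kD.
have := ladj_gen_leq (ladj_gen_lex_sigma genF sepF).
by rewrite card_sigma_set (eq_bigr _ (fun i _ => cardF i)) big_split /= sum_nat_mem.
Qed.

Lemma adim_lex_ge : exists D : {set 'I_n}, [/\ D \subset Iset E, separating D &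
  \sum_i adim_l (@E i) + #|D| <= adim_l eP].
Proof.
have eP_irr : irreflexive eP by case=> i v; rewrite lex_adj_eq Eirr.
have [S genS <-] := ladj_basis_exists eP_irr.
rewrite -(sigma_set_slice S) in genS *; set F := slice S in genS *.
have [genF sepF] := ladj_gen_lex_slices genS.
exists [set i in Iset E | undominated (@E i) (F i)]; split.
- by apply/subsetP => i; rewrite inE => /andP[].
- move=> i j; rewrite !inE => iI jI; rewrite iI jI /= => iD jD eij.
  case/or3P: (sepF i j eij); rewrite ?(negbTE iD) ?(negbTE jD) //.
  case/existsP => k /and4P[ki kj Fk sep]; exists k; split => //.
  rewrite /occupied; have [kEL|//] /= := boolP (k \in EL).
  rewrite inE (subsetP EL_sub_Iset k kEL) /=.
  by apply: edgeless_undominated; move: kEL; rewrite ?inE.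
rewrite card_sigma_set -sum_nat_mem -big_split /=; apply: leq_sum => i _.
rewrite inE; have [/andP[iI undomFi]|_] := boolP (_ && _).
  by rewrite addn1 in_classG_undominated_gt //; rewrite inE in iI.
by rewrite addn0 ladj_gen_leq.
Qed.

End LexicographicProduct.

Section TwinRepresentatives.
Variables (n : nat) (e : rel 'I_n) (V : 'I_n -> finType) (E : forall i, rel (V i))
  (rep : {set 'I_n} -> 'I_n).
Hypothesis esym : symmetric e.
Hypothesis eirr : irreflexive e.
Hypothesis rep_admissible : rep_ok e E rep.
Local Notation tw := (twin_class e).
Local Notation I := (Iset E).
Hypothesis EL_sub_I : EL E \subset I.

Definition Rset : {set 'I_n} := \bigcup_(C in twin_classes e) ((I :&: C) :\ rep C).

Lemma XE_Rset : XE e E rep = I :\: Rset.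
Proof. by []. Qed.

Lemma mem_Rset b : (b \in Rset) = [&& b \in I, b \in TG e & b != rep (tw b)].
Proof.
rewrite mem_TG; apply/bigcupP/and3P => [[C classC] | [bI classb brep]].
  rewrite in_setD1 in_setI => /and3P[brep bI bC].
  by rewrite -(twin_classes_eq classC bC).
by exists (tw b); rewrite // in_setD1 in_setI brep bI twin_class_refl.
Qed.

Lemma rep_twin_class b : b \in I -> b \in TG e -> rep (tw b) \in I :&: tw b.
Proof.
rewrite mem_TG => bI classb; apply: rep_admissible => //.
by apply/set0Pn; exists b; rewrite in_setI bI twin_class_refl.
Qed.

Lemma XE_twin_eq i j : i \in XE e E rep -> j \in XE e E rep -> j \in tw i -> i = j.
Proof.
rewrite XE_Rset !in_setD !mem_Rset => /andP[iR iI] /andP[jR jI] ji.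
have [//|ij] := eqVneq i j.
have TGi : i \in TG e.
  rewrite mem_TG; apply/imsetP; exists i => //; rewrite inE.
  by apply/card_gt1P; exists i, j; split; rewrite ?twin_class_refl.
have TGj : j \in TG e by rewrite mem_TG (twin_class_eq ji) -mem_TG.
move: iR jR; rewrite iI jI TGi TGj (twin_class_eq ji) /= !negbK => /eqP ri /eqP rj.
by rewrite [LHS]ri rj.
Qed.

Lemma card_Rset :
  #|Rset| = \sum_(C in twin_classes e | I :&: C != set0) (#|I :&: C| - 1).
Proof.
rewrite card_bigcup_disj; last first.
  move=> C C' x classC classC'; rewrite !in_setD1 !in_setI.
  move=> /and3P[_ _ xC] /and3P[_ _ xC'].
  by rewrite (twin_classes_eq classC xC) (twin_classes_eq classC' xC').
rewrite (bigID (fun C => I :&: C != set0)) /= [X in _ + X]big1 ?addn0; last first.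
  by move=> C /andP[_ /negbNE/eqP->]; rewrite set0D cards0.
apply: eq_bigr => C /andP[classC IC].
by rewrite (cardsD1 (rep C) (I :&: C)) rep_admissible // add1n subn1.
Qed.

Lemma separating_twin_eq D b b' : separating e E D -> b \in I -> b' \in I ->
  b \notin D -> b' \notin D -> b' \in tw b -> b = b'.
Proof.
move=> sepD bI b'I bD b'D bb'; have [//|nbb'] := eqVneq b' b.
have [k [kb kb' _]] := sepD _ _ bI b'I bD b'D (twin_adj bb' nbb').
by rewrite (twin_dist2 esym bb' kb kb') eqxx.
Qed.

Lemma rep_twin_occupied (D : {set 'I_n}) u :
  Rset \subset D -> u \in EL E -> u \in TG e -> u \notin Rset -> exists u',
    [/\ u' \in tw u, u' != u, occupied E D u' & u' \in I -> u' \in Rset].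
Proof.
move=> RD uEL uTG uR.
have uI : u \in I := subsetP EL_sub_I u uEL.
have classu : tw u \in twin_classes e by rewrite -mem_TG.
have [u' u'u u'_neq] := twin_classes_other classu (twin_class_refl e u).
have u'R : u' \in I -> u' \in Rset.
  move=> u'I; move: uR; rewrite !mem_Rset uI uTG u'I (twin_class_eq u'u) /= negbK.
  rewrite mem_TG (twin_class_eq u'u) -mem_TG uTG /= => /eqP <-.
  by rewrite u'_neq.
exists u'; split => //; rewrite /occupied.
have [u'EL|//] /= := boolP (u' \in EL E).
exact/(subsetP RD)/u'R/(subsetP EL_sub_I).
Qed.

(* A vertex u witnessing that i and j are not R'-related is occupied unless it
   is an edgeless representative of a twin class; then any other twin of u is
   occupied and distinguishes i and j just as u does. *)
Lemma separating_Rset A : rho_ok e E rep A -> separating e E (Rset :|: A).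
Proof.
case/andP => AX /forallP sepA i j iI jI; rewrite !in_setU !negb_or.
move=> /andP[iR iA] /andP[jR jA] eij.
have iX : i \in XE e E rep by rewrite XE_Rset in_setD iR iI.
have jX : j \in XE e E rep by rewrite XE_Rset in_setD jR jI.
have [Rij | ] := boolP (relR' e E rep i j).
  have /existsP[s /andP[sA sep]] := implyP (forallP (sepA i) j) Rij.
  exists s; split => //; first by apply: contraNneq iA => <-.
    by apply: contraNneq jA => <-.
  by rewrite /occupied in_setU sA !orbT.
rewrite /relR' iX jX eij /= => /forallPn[u].
rewrite negb_imply in_setU in_set2 !negb_or => /andP[/and3P[uVE ui uj] sep].
have [occu|] := boolP (occupied E (Rset :|: A) u); first by exists u.
rewrite /occupied negb_or negbK in_setU negb_or => /andP[uEL /andP[uR _]].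
have uTG : u \in TG e by move: uVE uEL; rewrite !inE => /nandP[/negbNE|/negP].
have [u' [u'u u'_neq occ u'R]] := rep_twin_occupied (subsetUl Rset A) uEL uTG uR.
have u'_notin v : v \in I -> v \notin Rset -> u' != v.
  by move=> vI vR; apply: contraNneq vR => u'v; rewrite -u'v u'R // u'v.
exists u'; split; rewrite ?u'_notin //.
have u'_dist2 v : v != u -> v != u' -> dist2 e u' v = dist2 e u v.
  by move=> vu vu'; rewrite !(dist2C esym _ v) (twin_dist2 esym u'u vu vu').
by rewrite !u'_dist2 // 1?eq_sym ?u'_notin.
Qed.

Section SeparatingSets.
Variable D : {set 'I_n}.
Hypothesis D_sub_I : D \subset I.
Hypothesis sepD : separating e E D.

(* Two twins in [I] cannot both be missing from [D], so each [b] of [Rset]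
   outside [D] forces the representative of its twin class into [D]; what is
   left of [D] after removing [Rset] and these representatives witnesses [rho']. *)
Definition Rreps := [set rep (tw b) | b in Rset :\: D].

Definition rho_set := (D :&: XE e E rep) :\: Rreps.

Lemma rep_Rset_outside b : b \in Rset :\: D ->
  rep (tw b) \in tw b /\ rep (tw b) \in D :&: XE e E rep.
Proof.
rewrite in_setD mem_Rset => /andP[bD /and3P[bI bTG brep]].
have /setIP[rI rb] := rep_twin_class bI bTG.
split => //; rewrite in_setI XE_Rset in_setD rI andbT.
rewrite mem_Rset (twin_class_eq rb) eqxx !andbF andbT.
apply: contraNT brep => rD; apply/eqP.
exact: separating_twin_eq sepD bI rI bD rD rb.
Qed.

Lemma card_Rreps : #|Rreps| = #|Rset :\: D|.
Proof.
apply: card_in_imset => b b' bR b'R /= eq_rep.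
have [rb _] := rep_Rset_outside bR; have [rb' _] := rep_Rset_outside b'R.
move: bR b'R; rewrite !in_setD !mem_Rset.
move=> /andP[bD /and3P[bI _ _]] /andP[b'D /and3P[b'I _ _]].
apply: separating_twin_eq sepD bI b'I bD b'D _.
by rewrite -(twin_class_eq rb) eq_rep (twin_class_eq rb') twin_class_refl.
Qed.

Lemma card_separating : #|Rset| + #|rho_set| = #|D|.
Proof.
have RrepsDX : Rreps \subset D :&: XE e E rep.
  by apply/subsetP => r /imsetP[b bR ->]; case: (rep_Rset_outside bR).
have DX : D :&: XE e E rep = D :\: Rset by rewrite XE_Rset setIDA (setIidPl D_sub_I).
have := cardsID Rset D; have := cardsID D Rset.
have := cardsID Rreps (D :&: XE e E rep); rewrite (setIidPr RrepsDX) card_Rreps DX setIC.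
rewrite /rho_set DX => c1 c2 <-; by rewrite -c2 -c1 addnA.
Qed.

Lemma XE_twin_outside i : i \in XE e E rep -> i \notin rho_set ->
  exists x, [/\ x \in I, x \notin D & x \in tw i].
Proof.
move=> iX; have [/imsetP[b bR ->] _ | iRreps] := boolP (i \in Rreps).
  have [rb _] := rep_Rset_outside bR.
  move: bR; rewrite in_setD mem_Rset => /andP[bD /and3P[bI _ _]].
  by exists b; rewrite (twin_class_eq rb) twin_class_refl.
rewrite in_setD in_setI iRreps iX andbT /= => iD; exists i; split => //.
  by move: iX; rewrite XE_Rset in_setD => /andP[].
exact: twin_class_refl.
Qed.

(* Two adjacent vertices of [XE] outside [rho_set] have twins in [I] outside
   [D]; a vertex separating those twins separates them too. *)
Lemma separating_XE i j : i \in XE e E rep -> j \in XE e E rep ->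
  i \notin rho_set -> j \notin rho_set -> e i j ->
  exists k, [/\ k != i, k != j, occupied E D k & dist2 e k i != dist2 e k j].
Proof.
move=> iX jX iA jA eij.
have [x [xI xD xi]] := XE_twin_outside iX iA.
have [y [yI yD yj]] := XE_twin_outside jX jA.
have xy : x != y.
  apply: contraTneq eij => exy; rewrite (XE_twin_eq iX jX) ?eirr //.
  by rewrite -(twin_class_eq xi) exy (twin_class_eq yj) twin_class_refl.
have [k [kx ky occk sep]] := sepD xI yI xD yD (twin_adj_lift esym xi yj eij xy).
have ki : k != i.
  apply: contraNneq sep => eki; subst k; rewrite eq_sym in kx.
  have eiy := twin_adj_lift esym (twin_class_refl e i) yj eij ky.
  by rewrite (dist2_adj eirr (twin_adj xi kx)) (dist2_adj eirr eiy).
have kj : k != j.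
  apply: contraNneq sep => ekj; subst k; rewrite eq_sym in ky.
  have eji : e j i by rewrite esym.
  have ejx := twin_adj_lift esym (twin_class_refl e j) xi eji kx.
  by rewrite (dist2_adj eirr (twin_adj yj ky)) (dist2_adj eirr ejx).
exists k; split => //.
by rewrite (twin_dist2 esym xi ki kx) (twin_dist2 esym yj kj ky).
Qed.

Lemma rho_ok_rho_set : rho_ok e E rep rho_set.
Proof.
apply/andP; split; first exact: subset_trans (subsetDl _ _) (subsetIr _ _).
apply/forallP => i; apply/forallP => j; apply/implyP => /and4P[iX jX eij /forallP Rij].
have [iA|iA] := boolP (i \in rho_set).
  by apply/existsP; exists i; rewrite iA (dist2_adj eirr eij) dist2E eqxx.
have [jA|jA] := boolP (j \in rho_set).
  have eji : e j i by rewrite esym.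
  by apply/existsP; exists j; rewrite jA (dist2_adj eirr eji) dist2E eqxx.
have [k [ki kj occk sep]] := separating_XE iX jX iA jA eij.
apply/existsP; exists k; rewrite sep andbT.
have : k \in VE e E.
  apply: contraTT sep => kVE; rewrite negbK; apply: (implyP (Rij k)).
  by rewrite in_setU in_set2 negb_or kVE negb_or ki kj.
rewrite in_set => /andP[kTG kEL].
have kD : k \in D by move: occk; rewrite /occupied in_set kEL.
rewrite in_setD in_setI kD XE_Rset in_setD mem_Rset (negbTE kTG) !andbF.
rewrite (subsetP D_sub_I k kD) !andbT; apply: contraNN kTG => /imsetP[b bR ->].
have [rb _] := rep_Rset_outside bR.
rewrite mem_TG (twin_class_eq rb) -mem_TG.
by move: bR; rewrite in_setD mem_Rset => /and4P[].
Qed.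

End SeparatingSets.

Lemma rho'_attained : exists2 A, rho_ok e E rep A & rho' e E rep = #|A|.
Proof.
have okXE : rho_ok e E rep (XE e E rep).
  apply/andP; split => //; apply/forallP => i; apply/forallP => j; apply/implyP.
  case/and4P => iX _ eij _; apply/existsP; exists i.
  by rewrite iX (dist2_adj eirr eij) dist2E eqxx.
rewrite /rho'.
have [A okA ->] := bigmin_attained (f := fun A : {set 'I_n} => #|A|) okXE (leqnn _).
by exists A.
Qed.

Lemma Rset_rho'_leq (D : {set 'I_n}) :
  D \subset I -> separating e E D -> #|Rset| + rho' e E rep <= #|D|.
Proof.
move=> D_sub_I sepD; rewrite -(card_separating D_sub_I sepD) leq_add2l.
exact: bigmin_leq (rho_ok_rho_set D_sub_I sepD).
Qed.

End TwinRepresentatives.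

Theorem theorem7 (n : nat) (e : rel 'I_n) (V : 'I_n -> finType)
  (E : forall i, rel (V i)) (rep : {set 'I_n} -> 'I_n) :
  2 <= n ->
  simple_graph e ->
  connected_graph e ->
  (forall i, simple_graph (E i)) ->
  (forall i, 0 < #|V i|) ->
  rep_ok e E rep ->
  adim_l (lex_adj e E) =
    \sum_(i < n) adim_l (E i)
    + \sum_(C in twin_classes e | Iset E :&: C != set0) (#|Iset E :&: C| - 1)
    + rho' e E rep.
Proof.
move=> _ [esym eirr] _ simpleE Vn0 rep_admissible.
have Esym i : symmetric (@E i) by case: (simpleE i).
have Eirr i : irreflexive (@E i) by case: (simpleE i).
have EL_sub_I := EL_sub_Iset E Vn0.
rewrite -(card_Rset rep_admissible) -addnA; apply/eqP; rewrite eqn_leq; apply/andP; split.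
- have [A okA ->] := rho'_attained E rep eirr.
  have sepRA := separating_Rset esym EL_sub_I okA.
  apply: leq_trans (adim_lex_le esym eirr Esym Eirr Vn0 sepRA) _.
  by rewrite leq_add2l cardsU leq_subr.
- have [D [D_sub_I sepD le_adim]] := adim_lex_ge esym eirr Esym Eirr Vn0.
  apply: leq_trans le_adim; rewrite leq_add2l.
  exact: (Rset_rho'_leq esym eirr rep_admissible D_sub_I sepD).
Qed.
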